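(* Let $G$ be a non-abelian subgroup of $\mathcal{H}(n,\mathbb{C})$ with $\Lambda_G\not\subset\mathbb{R}$, $G\not\subset\mathcal{SR}_n$, and suppose $U:=\mathbb{C}^n\setminus E_G\neq\emptyset$. Then: (i) every orbit $G(z)$ with $z\in U$ is minimal in $U$, i.e. $\overline{G(w)}\cap U=\overline{G(z)}\cap U$ for every $w\in\overline{G(z)}\cap U$; (ii) if moreover $G\not\subset\mathcal{R}_n$, then $E_G$ is a minimal set of $G$ in $\mathbb{C}^n$ (a nonempty closed $G$-invariant set containing no proper nonempty closed $G$-invariant subset) and $E_G\subset\overline{G(z)}$ for every $z\in\mathbb{C}^n$; (iii) any two orbits $G(z)$, $G(y)$ with $z,y\in U$ are homeomorphic.
   Context: $\mathcal{H}(n,\mathbb{C})$ is the group of all maps $z\mapsto\lambda z+b$ of $\mathbb{C}^n$ with $\lambda\in\mathbb{C}^*$, $b\in\mathbb{C}^n$ ($\lambda$ = ratio). $\mathcal{T}_n$ = translations; $\mathcal{R}_n$ = elements whose ratio has modulus $1$. Every element of $\mathcal{H}(n,\mathbb{C})\setminus\mathcal{T}_n$ has a unique fixed point, its center. $H_2=(\frac{\pi}{2}+\pi\mathbb{Z})\cup\pi\mathbb{Z}$, $F_2=\{e^{ix}:x\in H_2\}$, $H_3=(\frac{\pi}{3}+\pi\mathbb{Z})\cup(-\frac{\pi}{3}+\pi\mathbb{Z})\cup\pi\mathbb{Z}$, $F_3=\{e^{ix}:x\in H_3\}$; $\mathcal{S}_i\mathcal{R}_n=\{z\mapsto\lambda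 z+b:\lambda\in F_i, b\in\mathbb{C}^n\}$, $\mathcal{SR}_n=\mathcal{S}_2\mathcal{R}_n\cup\mathcal{S}_3\mathcal{R}_n$. For a subgroup $G$: $G(z)$ is the orbit of $z$; $\Lambda_G$ the set of ratios of elements of $G$; $\Gamma_G$ the set of centers of elements of $G\setminus\mathcal{T}_n$; $E_G$ the smallest complex affine subspace of $\mathbb{C}^n$ containing $\Gamma_G$. Bars denote closure. *)

From Stdlib Require Export Reals ZArith.
From Stdlib Require Vectors.Fin.
Open Scope R_scope.

Definition C := (R * R)%type.
Definition Cre (z : C) : R := fst z.
Definition Cim (z : C) : R := snd z.
Definition C0 : C := (0, 0).
Definition C1 : C := (1, 0).
Definition Cadd (z w : C) : C := (fst z + fst w, snd z + snd w).
Definition Copp (z : C) : C := (- fst z, - snd z).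
Definition Csub (z w : C) : C := Cadd z (Copp w).
Definition Cmul (z w : C) : C :=
  (fst z * fst w - snd z * snd w, fst z * snd w + snd z * fst w).
Definition Cinv (z : C) : C :=
  let d := fst z * fst z + snd z * snd z in (fst z / d, - snd z / d).
Definition Cnorm (z : C) : R := sqrt (fst z * fst z + snd z * snd z).
Definition Cexpi (x : R) : C := (cos x, sin x).

Definition Cn (n : nat) := Fin.t n -> C.
Definition vadd {n} (u v : Cn n) : Cn n := fun i => Cadd (u i) (v i).
Definition vscal {n} (l : C) (v : Cn n) : Cn n := fun i => Cmul l (v i).
Definition vzero {n} : Cn n := fun _ => C0.

(** Elements of H(n,C): z |-> lam z + b, encoded as pairs (lam, b), lam <> 0. *)
Definition Hel (n : nat) := (C * Cn n)%type.
Definition ratio {n} (g : Hel n) : C := fst g.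
Definition happ {n} (g : Hel n) (z : Cn n) : Cn n := vadd (vscal (fst g) z) (snd g).
Definition hcomp {n} (g h : Hel n) : Hel n :=
  (Cmul (fst g) (fst h), vadd (vscal (fst g) (snd h)) (snd g)).
Definition hid {n} : Hel n := (C1, vzero).
Definition hinv {n} (g : Hel n) : Hel n :=
  (Cinv (fst g), vscal (Copp (Cinv (fst g))) (snd g)).

Definition is_subgroup {n} (G : Hel n -> Prop) : Prop :=
  (forall g, G g -> fst g <> C0) /\
  G hid /\
  (forall g h, G g -> G h -> G (hcomp g h)) /\
  (forall g, G g -> G (hinv g)).

Definition non_abelian {n} (G : Hel n -> Prop) : Prop :=
  exists g h, G g /\ G h /\ hcomp g h <> hcomp h g.

Definition Lambda {n} (G : Hel n -> Prop) (l : C) : Prop :=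
  exists g, G g /\ ratio g = l.
Definition H2 (x : R) : Prop :=
  exists k : Z, x = PI / 2 + IZR k * PI \/ x = IZR k * PI.
Definition F2 (l : C) : Prop := exists x, H2 x /\ l = Cexpi x.
Definition H3 (x : R) : Prop :=
  exists k : Z, x = PI / 3 + IZR k * PI \/ x = - (PI / 3) + IZR k * PI
                \/ x = IZR k * PI.
Definition F3 (l : C) : Prop := exists x, H3 x /\ l = Cexpi x.
Definition in_SR {n} (g : Hel n) : Prop := F2 (ratio g) \/ F3 (ratio g).
Definition in_R {n} (g : Hel n) : Prop := Cnorm (ratio g) = 1.
Definition is_translation {n} (g : Hel n) : Prop := ratio g = C1.

Definition Gamma {n} (G : Hel n -> Prop) (z : Cn n) : Prop :=
  exists g, G g /\ ~ is_translation g /\ happ g z = z.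
Definition is_lin_subspace {n} (V : Cn n -> Prop) : Prop :=
  V vzero /\ (forall u v, V u -> V v -> V (vadd u v)) /\
  (forall l u, V u -> V (vscal l u)).
Definition is_affine_subspace {n} (A : Cn n -> Prop) : Prop :=
  (forall z, ~ A z) \/
  exists a (V : Cn n -> Prop), is_lin_subspace V /\
    forall z, A z <-> exists v, V v /\ z = vadd a v.
Definition EG {n} (G : Hel n -> Prop) (z : Cn n) : Prop :=
  forall A : Cn n -> Prop, is_affine_subspace A ->
    (forall w, Gamma G w -> A w) -> A z.

(** Topology of C^n (sup-norm balls, equivalent to the usual topology) *)
Definition close {n} (eps : R) (x y : Cn n) : Prop :=
  forall i, Cnorm (Csub (x i) (y i)) < eps.
Definition closure {n} (S : Cn n -> Prop) (x : Cn n) : Prop :=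
  forall eps, 0 < eps -> exists y, S y /\ close eps x y.
Definition is_closed {n} (S : Cn n -> Prop) : Prop :=
  forall x, closure S x -> S x.
Definition orbit {n} (G : Hel n -> Prop) (z : Cn n) (w : Cn n) : Prop :=
  exists g, G g /\ w = happ g z.
Definition G_invariant {n} (G : Hel n -> Prop) (S : Cn n -> Prop) : Prop :=
  forall g z, G g -> S z -> S (happ g z).
Definition minimal_set {n} (G : Hel n -> Prop) (M : Cn n -> Prop) : Prop :=
  (exists z, M z) /\ is_closed M /\ G_invariant G M /\
  forall F : Cn n -> Prop, (exists z, F z) -> is_closed F -> G_invariant G F ->
    (forall z, F z -> M z) -> forall z, M z -> F z.

Definition cont_on {n} (S : Cn n -> Prop) (f : Cn n -> Cn n) : Prop :=
  forall x, S x -> forall eps, 0 < eps -> exists delta, 0 < delta /\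
    forall y, S y -> close delta x y -> close eps (f x) (f y).
Definition homeomorphic {n} (S T : Cn n -> Prop) : Prop :=
  exists f g : Cn n -> Cn n,
    (forall x, S x -> T (f x)) /\ (forall y, T y -> S (g y)) /\
    (forall x, S x -> g (f x) = x) /\ (forall y, T y -> f (g y) = y) /\
    cont_on S f /\ cont_on T g.

(** Linear (hence affine) subspaces of [C^n] are closed, by
      induction on [n]; so [E_G] is closed, [G]-invariant, and nonempty since
      [G] is non-abelian.
    - (i)   If [g z] approaches a point [w] outside [E_G], then [|lam_g|] stays
      bounded below (as [g] maps [E_G] into itself), so [g^-1 w] approaches
      [z]: orbit closures outside [E_G] are symmetric, hence minimal.
    - (iii) [G] acts freely outside [E_G] (a point fixed by a non-translation
      is its center), so [g z |-> g y] is a well-defined bijection [G(z) -> G(y)];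
      it is continuous because [g' z] near [g z] forces [lam_(g^-1 g')] near [1].
    - (ii)  The multipliers of [G] (scalars preserving its translation vectors)
      form a subring of [C] containing the ratios. Such a subring is dense or
      discrete, and discreteness would force all ratios into [F2 ∪ F3]. So the
      closure [W] of the translation vectors is a linear subspace, and commutators
      show [E_G ⊆ c + W] for the center [c] of a contraction [h]; the orbit
      points [b + h^N z] then accumulate on all of [E_G]. *)

From Pilot Require Import Defs.
From Coquelicot Require Import Complex.
From Stdlib Require Import ClassicalEpsilon FunctionalExtensionality Classical Lra Lia.

(** The complex numbers of [Defs] are pairs of reals, exactly like Coquelicot's
    [C]; we compute with Coquelicot's field structure and norm [Cmod]. *)
Definition DC_field_theory :
  @field_theory Defs.C (RtoC 0) (RtoC 1) Cplus Cmult Cminus Copp Cdiv Cinv (@eq Defs.C)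
  := C_field_theory.
Add Field DC_field : DC_field_theory.

Ltac toC := repeat (change Defs.Cadd with Cplus || change Defs.Cmul with Cmult ||
  change Defs.Copp with Copp || change Defs.Csub with Cminus || change C0 with (RtoC 0) ||
  change Defs.C1 with (RtoC 1));
  match goal with |- @eq _ ?a ?b => let T := type of a in change (@eq T a b) end.

Lemma Cinv_e z : Defs.Cinv z = Cinv z.
Proof. destruct z as [x y]. unfold Defs.Cinv, Cinv; simpl. f_equal; f_equal; ring. Qed.

Lemma Cnorm_e z : Cnorm z = Cmod z.
Proof. destruct z as [x y]. unfold Cnorm, Cmod; simpl. f_equal; ring. Qed.

Lemma close_iff n eps (x y : Cn n) :
  close eps x y <-> forall i, Cmod (x i - y i)%C < eps.
Proof. unfold close. split; intros H i; specialize (H i); rewrite Cnorm_e in *; exact H. Qed.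

Lemma vec_eq n (u v : Cn n) : (forall i, u i = v i) -> u = v.
Proof. intros; apply functional_extensionality; auto. Qed.

Lemma hel_eq n (g h : Hel n) : fst g = fst h -> (forall i, snd g i = snd h i) -> g = h.
Proof. destruct g, h; simpl; intros -> H. f_equal. apply vec_eq; auto. Qed.

Lemma happ_i n (g : Hel n) z i : happ g z i = (fst g * z i + snd g i)%C.
Proof. reflexivity. Qed.

Lemma fst_hcomp n (g h : Hel n) : fst (hcomp g h) = (fst g * fst h)%C.
Proof. reflexivity. Qed.

Lemma snd_hcomp n (g h : Hel n) i : snd (hcomp g h) i = (fst g * snd h i + snd g i)%C.
Proof. reflexivity. Qed.

Lemma fst_hinv n (g : Hel n) : fst (hinv g) = (/ fst g)%C.
Proof. simpl. apply Cinv_e. Qed.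

Lemma snd_hinv n (g : Hel n) i : snd (hinv g) i = (- (/ fst g) * snd g i)%C.
Proof. simpl. unfold vscal. rewrite Cinv_e. reflexivity. Qed.

Lemma happ_comp n (g h : Hel n) z : happ (hcomp g h) z = happ g (happ h z).
Proof. apply vec_eq; intro i. rewrite !happ_i, fst_hcomp, snd_hcomp. toC; ring. Qed.

Lemma happ_inv_l n (g : Hel n) z : fst g <> RtoC 0 -> happ (hinv g) (happ g z) = z.
Proof. intro H. apply vec_eq; intro i. rewrite !happ_i, fst_hinv, snd_hinv. toC; field; auto. Qed.

Lemma happ_inv_r n (g : Hel n) z : fst g <> RtoC 0 -> happ g (happ (hinv g) z) = z.
Proof. intro H. apply vec_eq; intro i. rewrite !happ_i, fst_hinv, snd_hinv. toC; field; auto. Qed.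

Lemma happ_sub n (g : Hel n) u v i : (happ g u i - happ g v i)%C = (fst g * (u i - v i))%C.
Proof. rewrite !happ_i. toC; ring. Qed.

Lemma Csub_nz (a b : Complex.C) : a <> b -> (a - b)%C <> RtoC 0.
Proof. intros H E. apply H. replace a with ((a - b) + b)%C by ring. rewrite E. ring. Qed.

Lemma Cmod_sym (a b : Complex.C) : Cmod (a - b) = Cmod (b - a).
Proof. rewrite <- Cmod_opp. f_equal. ring. Qed.

Lemma div_lt X L e : 0 < L -> X < e * L -> X / L < e.
Proof. intros HL HX. apply (Rmult_lt_reg_r L); auto. replace (X / L * L) with X by (field; lra). exact HX. Qed.

(** If [0 <= L] then [L * (e / (2 (L+1))) < e / 2]: the usual slack when a
    perturbation of size [e / (2 (L+1))] is magnified by a factor [L]. *)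
Lemma scaled_half L e : 0 <= L -> 0 < e -> L * (e / (2 * (L + 1))) < e / 2.
Proof.
  intros HL He. replace (L * (e / (2 * (L + 1)))) with ((L * e) / (2 * (L + 1))) by (field; lra).
  apply div_lt; [lra|]. replace (e / 2 * (2 * (L + 1))) with (e * L + e) by field. nra.
Qed.

Lemma vbound n (x : Cn n) : exists B, 0 < B /\ forall i, Cmod (x i) <= B.
Proof.
  induction n.
  - exists 1. split; [lra|]. intro i. apply (Fin.case0 (fun _ => _)). exact i.
  - destruct (IHn (fun q => x (Fin.FS q))) as [B [HB HBi]].
    exists (B + Cmod (x Fin.F1)). pose proof (Cmod_ge_0 (x Fin.F1)). split; [lra|].
    intro i. pattern i. apply Fin.caseS'.
    + lra.
    + intro q. specialize (HBi q). simpl in HBi. lra.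
Qed.

Lemma close_mono n d d' (x y : Cn n) : d <= d' -> close d x y -> close d' x y.
Proof. intros Hd Hc. rewrite close_iff in *. intro i. specialize (Hc i). lra. Qed.

Lemma closure_incl n (S : Cn n -> Prop) x : S x -> closure S x.
Proof.
  intros Hx eps Heps. exists x. split; auto. rewrite close_iff. intro i.
  replace (x i - x i)%C with (RtoC 0) by ring. rewrite Cmod_0. auto.
Qed.

(** Linear subspaces of [C^n] are closed; by induction on [n], eliminating the
    first coordinate with a pivot vector [e] of [V]. *)
Definition ext0 {m} (u : Cn m) : Cn (S m) := fun i => Fin.caseS' i (fun _ => Defs.C) C0 u.
Definition tl {m} (x : Cn (S m)) : Cn m := fun q => x (Fin.FS q).

Lemma ext0_tl m (y : Cn (S m)) : y Fin.F1 = RtoC 0 -> ext0 (tl y) = y.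
Proof. intro H. apply vec_eq. intro i. pattern i; apply Fin.caseS'; [|reflexivity]. simpl. auto. Qed.

Lemma lin_comb n (V : Cn n -> Prop) u v mu : is_lin_subspace V -> V u -> V v ->
  V (fun i => u i + mu * v i)%C.
Proof. intros [_ [Ha Hs]] Hu Hv. exact (Ha _ _ Hu (Hs mu _ Hv)). Qed.

Lemma lin_slice m (V : Cn (S m) -> Prop) :
  is_lin_subspace V -> is_lin_subspace (fun u : Cn m => V (ext0 u)).
Proof.
  intros [H0 [Ha Hs]]. split; [|split].
  - replace (ext0 vzero) with (@vzero (S m)); auto.
    apply vec_eq. intro i. pattern i; apply Fin.caseS'; reflexivity.
  - intros u v Hu Hv. replace (ext0 (vadd u v)) with (vadd (ext0 u) (ext0 v)); auto.
    apply vec_eq. intro i. pattern i; apply Fin.caseS'; [|reflexivity].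
    unfold vadd, ext0; simpl. toC; ring.
  - intros l u Hu. replace (ext0 (vscal l u)) with (vscal l (ext0 u)); auto.
    apply vec_eq. intro i. pattern i; apply Fin.caseS'; [|reflexivity].
    unfold vscal, ext0; simpl. toC; ring.
Qed.

(** A pivot: either [V] contains a vector with first coordinate [1], or all
    vectors adherent to [V] have first coordinate [0] (and we take [e = 0]). *)
Lemma lin_pivot m (V : Cn (S m) -> Prop) : is_lin_subspace V ->
  exists e, V e /\ forall v, closure V v -> v Fin.F1 = (v Fin.F1 * e Fin.F1)%C.
Proof.
  intro HV. destruct (classic (exists e, V e /\ e Fin.F1 <> RtoC 0)) as [[e [He Hne]]|Hn].
  - exists (vscal (/ e Fin.F1)%C e). split; [apply HV; auto|].
    intros v _. unfold vscal. toC. field. auto.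
  - exists vzero. split; [apply HV|]. intros v Hv.
    assert (v Fin.F1 = RtoC 0) as ->; [|unfold vzero, C0; toC; ring].
    destruct (Req_dec (Cmod (v Fin.F1)) 0) as [E|E]; [apply Cmod_eq_0; auto|].
    pose proof (Cmod_ge_0 (v Fin.F1)).
    destruct (Hv (Cmod (v Fin.F1))) as [y [Hy Hc]]; [lra|].
    rewrite close_iff in Hc. specialize (Hc Fin.F1).
    assert (y Fin.F1 = RtoC 0) as Ey by (apply NNPP; intro; apply Hn; exists y; auto).
    rewrite Ey in Hc. replace (v Fin.F1 - RtoC 0)%C with (v Fin.F1) in Hc by ring. lra.
Qed.

Definition elim1 {m} (e x : Cn (S m)) : Cn (S m) := fun i => (x i + (- x Fin.F1) * e i)%C.

Lemma close_elim1 m (e x v : Cn (S m)) B d : 0 < B -> (forall i, Cmod (e i) <= B) ->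
  close (d / (1 + B)) x v -> close d (elim1 e x) (elim1 e v).
Proof.
  intros HB HBi Hc. rewrite close_iff in *. intro q. unfold elim1.
  replace (x q + - x Fin.F1 * e q - (v q + - v Fin.F1 * e q))%C
    with ((x q - v q) + (- (x Fin.F1 - v Fin.F1)) * e q)%C by ring.
  eapply Rle_lt_trans; [apply Cmod_triangle|]. rewrite Cmod_mult, Cmod_opp.
  pose proof (Hc q). pose proof (Hc Fin.F1). pose proof (HBi q).
  pose proof (Cmod_ge_0 (x q - v q)%C). pose proof (Cmod_ge_0 (x Fin.F1 - v Fin.F1)%C).
  assert (Cmod (x Fin.F1 - v Fin.F1) * Cmod (e q) <= d / (1 + B) * B)
    by (apply Rmult_le_compat; [apply Cmod_ge_0|apply Cmod_ge_0|lra|lra]).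
  assert (d / (1 + B) + d / (1 + B) * B = d) by (field; lra).
  lra.
Qed.

(** Induction step: [x - x_1 e] is adherent to the slice of [V], hence lies in
    it by induction, and [x] is recovered as [(x - x_1 e) + x_1 e]. *)
Lemma lin_closed n : forall V : Cn n -> Prop, is_lin_subspace V -> is_closed V.
Proof.
  induction n as [|m IH]; intros V HV x Hx.
  - replace x with (@vzero 0); [apply HV|].
    apply vec_eq. intro i. apply (Fin.case0 (fun _ => _)). exact i.
  - destruct (lin_pivot m V HV) as [e [He Pe]].
    destruct (vbound _ e) as [B [HB HBi]].
    assert (first0 : forall v, closure V v -> elim1 e v Fin.F1 = RtoC 0).
    { intros v Hv. unfold elim1. rewrite (Pe v Hv) at 1. toC; ring. }
    assert (Hy : V (elim1 e x)).
    { rewrite <- (ext0_tl _ _ (first0 x Hx)).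
      apply (IH _ (lin_slice m V HV)). intros eps Heps.
      destruct (Hx (eps / (1 + B))) as [v [Hv Hc]]; [apply Rdiv_lt_0_compat; lra|].
      exists (tl (elim1 e v)). split.
      - rewrite (ext0_tl _ _ (first0 v (closure_incl _ _ _ Hv))). unfold elim1. apply lin_comb; auto.
      - pose proof (close_elim1 m e x v B eps HB HBi Hc) as Hc'.
        intro q. exact (Hc' (Fin.FS q)). }
    replace x with (fun i => (elim1 e x i + (x Fin.F1) * e i)%C); [apply lin_comb; auto|].
    apply vec_eq. intro i. unfold elim1. toC; ring.
Qed.

Lemma affine_closed n (A : Cn n -> Prop) : is_affine_subspace A -> is_closed A.
Proof.
  intros [Hemp | [a [V [HV HA]]]] x Hx.
  - destruct (Hx 1 Rlt_0_1) as [y [Hy _]]. exfalso; eapply Hemp; eauto.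
  - apply HA. exists (fun i => (x i - a i)%C). split.
    + apply (lin_closed n V HV). intros eps Heps. destruct (Hx eps Heps) as [y [Hy Hc]].
      apply HA in Hy. destruct Hy as [v [Hv ->]]. exists v. split; auto.
      rewrite close_iff in *. intro i. specialize (Hc i).
      replace (x i - a i - v i)%C with (x i - vadd a v i)%C; auto. unfold vadd. toC; ring.
    + apply vec_eq. intro i. unfold vadd. toC; ring.
Qed.

Definition center {n} (g : Hel n) : Cn n := fun i => (snd g i / (RtoC 1 - fst g))%C.

Lemma center_fix n (g : Hel n) : fst g <> RtoC 1 -> happ g (center g) = center g.
Proof. intro H. apply vec_eq; intro i. rewrite happ_i. unfold center. toC. field. apply Csub_nz. auto. Qed.

Lemma fix_eq n (g : Hel n) c i : happ g c = c -> snd g i = ((RtoC 1 - fst g) * c i)%C.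
Proof.
  intro E. apply (f_equal (fun f => f i)) in E. rewrite happ_i in E.
  transitivity ((fst g * c i + snd g i) - fst g * c i)%C; [toC; ring|]. rewrite E. toC; ring.
Qed.

Lemma affine_preimage n (g : Hel n) (A : Cn n -> Prop) : fst g <> RtoC 0 ->
  is_affine_subspace A -> is_affine_subspace (fun z => A (happ g z)).
Proof.
  intros Hnz [Hemp | [a0 [W [HW HAe]]]].
  - left. intros z H. apply (Hemp _ H).
  - right. exists (happ (hinv g) a0), W. split; auto. intro z. rewrite HAe. split.
    + intros [w [Hw E]]. exists (vscal (/ fst g)%C w). split; [apply HW; auto|].
      apply vec_eq; intro i. apply (f_equal (fun f => f i)) in E. rewrite happ_i in E.
      unfold vadd, vscal. rewrite happ_i, fst_hinv, snd_hinv.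
      replace (z i) with ((fst g * z i + snd g i - snd g i) / fst g)%C by (toC; field; auto).
      rewrite E. unfold vadd. toC. field. auto.
    + intros [v [Hv ->]]. exists (vscal (fst g) v). split; [apply HW; auto|].
      apply vec_eq; intro i. unfold vadd, vscal. rewrite !happ_i, fst_hinv, snd_hinv.
      unfold vadd. toC. field. auto.
Qed.

Section Subgroup.
Variable n : nat.
Variable G : Hel n -> Prop.
Hypothesis HG : is_subgroup G.

Lemma G_nz g : G g -> fst g <> RtoC 0. Proof. destruct HG as [H _]. apply H. Qed.
Lemma G_id : G hid. Proof. destruct HG as [_ [H _]]. exact H. Qed.
Lemma G_comp g h : G g -> G h -> G (hcomp g h). Proof. destruct HG as [_ [_ [H _]]]. apply H. Qed.
Lemma G_inv g : G g -> G (hinv g). Proof. destruct HG as [_ [_ [_ H]]]. apply H. Qed.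

Lemma center_Gamma g : G g -> fst g <> RtoC 1 -> Gamma G (center g).
Proof. intros Gg Hg. exists g. split; auto. split; [exact Hg|]. apply center_fix; auto. Qed.

Lemma Gamma_EG z : Gamma G z -> EG G z.
Proof. intros Hz A _ HA. auto. Qed.

(** [E_G] is an intersection of closed sets. *)
Lemma EG_closed : is_closed (EG G).
Proof.
  intros x Hx A HA HGA. apply (affine_closed _ A HA). intros eps Heps.
  destruct (Hx eps Heps) as [y [Hy Hc]]. exists y. split; [apply Hy; auto | auto].
Qed.

(** Two commuting translations commute, so a non-abelian [G] has a center. *)
Lemma Gamma_nonempty : non_abelian G -> exists a, Gamma G a.
Proof.
  intros [g [h [Gg [Gh Hne]]]].
  destruct (classic (fst g = RtoC 1)) as [Eg|Eg].
  - destruct (classic (fst h = RtoC 1)) as [Eh|Eh].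
    + exfalso. apply Hne. apply hel_eq.
      * rewrite !fst_hcomp, Eg, Eh. reflexivity.
      * intro i. rewrite !snd_hcomp, Eg, Eh. toC. ring.
    + exists (center h). apply center_Gamma; auto.
  - exists (center g). apply center_Gamma; auto.
Qed.

(** [Gamma_G] is [G]-invariant: [g] maps the center of [k] to that of [g k g^-1]. *)
Lemma Gamma_inv g c : G g -> Gamma G c -> Gamma G (happ g c).
Proof.
  intros Gg [k [Gk [Hk Hkc]]]. pose proof (G_nz g Gg) as Hnz.
  exists (hcomp g (hcomp k (hinv g))).
  split; [apply G_comp; auto; apply G_comp; auto; apply G_inv; auto|]. split.
  - intro E. apply Hk. unfold is_translation, ratio in *. rewrite <- E.
    rewrite !fst_hcomp, fst_hinv. toC. field. exact Hnz.
  - rewrite !happ_comp, happ_inv_l, Hkc; auto.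
Qed.

(** [E_G] is [G]-invariant: pull back the affine subspaces containing [Gamma_G]. *)
Lemma EG_inv g x : G g -> EG G x -> EG G (happ g x).
Proof.
  intros Gg Hx A HA HGA.
  apply (Hx (fun z => A (happ g z))); [apply affine_preimage; auto; apply G_nz; auto|].
  intros c Hc. apply HGA. apply Gamma_inv; auto.
Qed.

Lemma EG_apart w : ~ EG G w ->
  exists r, 0 < r /\ forall y, EG G y -> exists i, r <= Cmod (w i - y i)%C.
Proof.
  intro Hw. assert (~ closure (EG G) w) as Hc by (intro H; apply Hw; apply EG_closed; auto).
  apply not_all_ex_not in Hc. destruct Hc as [r Hr].
  apply imply_to_and in Hr. destruct Hr as [Hr Hne]. exists r. split; auto.
  intros y Hy. apply NNPP. intro Hn. apply Hne. exists y. split; auto.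
  rewrite close_iff. intro i. apply Rnot_le_lt. intro. apply Hn. exists i. auto.
Qed.

End Subgroup.

Lemma close_hinv n (g : Hel n) z w eps : fst g <> RtoC 0 ->
  close (eps * Cmod (fst g)) (happ g z) w -> close eps z (happ (hinv g) w).
Proof.
  intros Hnz Hc. rewrite close_iff in *. intro j. specialize (Hc j).
  assert (0 < Cmod (fst g)) by (apply Cmod_gt_0; auto).
  replace (z j - happ (hinv g) w j)%C with ((happ g z j - w j) / fst g)%C
    by (rewrite !happ_i, fst_hinv, snd_hinv; toC; field; auto).
  rewrite Cmod_div; auto. apply div_lt; auto.
Qed.

Section PartI.
Variable n : nat.
Variable G : Hel n -> Prop.
Hypothesis HG : is_subgroup G.

Lemma closure_orbit_trans z y :
  closure (orbit G z) y -> forall x, closure (orbit G y) x -> closure (orbit G z) x.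
Proof.
  intros Hy x Hx eps Heps.
  destruct (Hx (eps/2)) as [u [[h [Gh ->]] Hc1]]; [lra|].
  set (L := Cmod (fst h)). assert (0 <= L) by apply Cmod_ge_0.
  destruct (Hy (eps / (2 * (L + 1)))) as [v [[g [Gg ->]] Hc2]]; [apply Rdiv_lt_0_compat; lra|].
  exists (happ (hcomp h g) z). split; [exists (hcomp h g); split; auto; apply G_comp; auto|].
  rewrite close_iff in *. intro i. rewrite happ_comp.
  replace (x i - happ h (happ g z) i)%C with ((x i - happ h y i) + (happ h y i - happ h (happ g z) i))%C
    by ring.
  rewrite happ_sub. eapply Rle_lt_trans; [apply Cmod_triangle|]. rewrite Cmod_mult. fold L.
  specialize (Hc1 i). specialize (Hc2 i).
  assert (L * Cmod (y i - happ g z i) <= L * (eps / (2 * (L + 1)))) by (apply Rmult_le_compat_l; lra).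
  pose proof (scaled_half L eps). lra.
Qed.

(** If [g z] is [r/2]-close to a point [w] at distance [r] from [E_G], then
    [|lam_g|] is bounded below, since [g] maps a point [a] of [E_G] into [E_G]. *)
Lemma ratio_lower_bound a z w r B g : EG G a -> G g -> 0 < B ->
  (forall i, Cmod (z i - a i) <= B) ->
  (forall y, EG G y -> exists i, r <= Cmod (w i - y i)) ->
  close (r / 2) (happ g z) w -> r <= 2 * Cmod (fst g) * B.
Proof.
  intros Ha Gg HB HBi Hr Hc.
  destruct (Hr (happ g a) (EG_inv n G HG g a Gg Ha)) as [i Hi].
  rewrite close_iff in Hc. specialize (Hc i). specialize (HBi i).
  replace (w i - happ g a i)%C with ((w i - happ g z i) + (happ g z i - happ g a i))%C in Hi by ring.
  rewrite happ_sub in Hi.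
  pose proof (Cmod_triangle (w i - happ g z i) (fst g * (z i - a i))) as T.
  rewrite Cmod_mult, Cmod_sym in T.
  assert (Cmod (fst g) * Cmod (z i - a i) <= Cmod (fst g) * B)
    by (apply Rmult_le_compat_l; [apply Cmod_ge_0|lra]).
  lra.
Qed.

Lemma orbit_closure_sym a z w : EG G a -> ~ EG G w ->
  closure (orbit G z) w -> closure (orbit G w) z.
Proof.
  intros Ha Hw Hzw eps Heps.
  destruct (EG_apart n G w Hw) as [r [Hr Hrw]].
  destruct (vbound _ (fun i => z i - a i)%C) as [B [HB HBi]].
  set (d := Rmin (r/2) (eps * r / (2 * B))).
  assert (Hd : 0 < d) by (apply Rmin_glb_lt; [lra|apply Rdiv_lt_0_compat; nra]).
  destruct (Hzw d Hd) as [y [[g [Gg ->]] Hc]].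
  assert (HL : r <= 2 * Cmod (fst g) * B).
  { apply (ratio_lower_bound a z w r B g); auto.
    apply (close_mono _ d); [apply Rmin_l|]. rewrite close_iff in *. intro i. rewrite Cmod_sym. apply Hc. }
  exists (happ (hinv g) w). split; [exists (hinv g); split; auto; apply G_inv; auto|].
  apply close_hinv; [apply (G_nz n G HG); auto|].
  apply (close_mono _ d); [|rewrite close_iff in *; intro i; rewrite Cmod_sym; apply Hc].
  assert (d <= eps * r / (2 * B)) by apply Rmin_r.
  assert (eps * r / (2 * B) <= eps * Cmod (fst g)); [|lra].
  apply (Rmult_le_reg_r (2 * B)); [lra|].
  replace (eps * r / (2 * B) * (2 * B)) with (eps * r) by (field; lra). nra.
Qed.

Lemma part_i a : EG G a -> forall z, ~ EG G z ->
  forall w, closure (orbit G z) w -> ~ EG G w ->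
    forall x, (closure (orbit G w) x /\ ~ EG G x) <-> (closure (orbit G z) x /\ ~ EG G x).
Proof.
  intros Ha z Hz w Hzw Hw x. split; intros [H1 H2]; split; auto.
  - apply (closure_orbit_trans z w); auto.
  - apply (closure_orbit_trans w z); auto. apply (orbit_closure_sym a); auto.
Qed.

End PartI.

Section PartIII.
Variable n : nat.
Variable G : Hel n -> Prop.
Hypothesis HG : is_subgroup G.

(** [G] acts freely outside [E_G]: if [g z = h z] with [lam_g <> lam_h], then
    [z] is the center of the non-translation [h^-1 g]. *)
Lemma free_action z g h : ~ EG G z -> G g -> G h -> happ g z = happ h z -> g = h.
Proof.
  intros Hz Gg Gh E. pose proof (G_nz n G HG h Gh) as Hnz.
  destruct (classic (fst g = fst h)) as [Ef|Ef].
  - apply hel_eq; auto. intro i. apply (f_equal (fun f => f i)) in E. rewrite !happ_i, Ef in E.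
    transitivity ((fst h * z i + snd g i) - fst h * z i)%C; [toC; ring|]. rewrite E. toC; ring.
  - exfalso. apply Hz. apply Gamma_EG. exists (hcomp (hinv h) g).
    split; [apply G_comp; auto; apply G_inv; auto|]. split.
    + intro E1. apply Ef. unfold is_translation, ratio in E1. rewrite fst_hcomp, fst_hinv in E1.
      transitivity (fst h * (/ fst h * fst g))%C; [field; auto|]. rewrite E1. toC; ring.
    + rewrite happ_comp, E. apply happ_inv_l; auto.
Qed.

(** If [k] moves a point [z] at distance [r] from [E_G] by less than [delta],
    then [|lam_k - 1| r < delta]: otherwise the center of [k], a point of
    [E_G], would be too close to [z]. *)
Lemma ratio_near_one z r k delta : G k -> 0 < delta -> 0 <= r ->
  (forall y, EG G y -> exists i, r <= Cmod (z i - y i)) ->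
  close delta (happ k z) z -> Cmod (fst k - RtoC 1) * r < delta.
Proof.
  intros Gk Hd Hr Hrz Hc.
  destruct (classic (fst k = RtoC 1)) as [E|E].
  - rewrite E. replace (RtoC 1 - RtoC 1)%C with (RtoC 0) by ring. rewrite Cmod_0. lra.
  - destruct (Hrz (center k)) as [i Hi]; [apply Gamma_EG, center_Gamma; auto|].
    rewrite close_iff in Hc. specialize (Hc i).
    replace (happ k z i - z i)%C with ((happ k z i - happ k (center k) i) - (z i - center k i))%C
      in Hc by (rewrite (center_fix n k E); ring).
    rewrite happ_sub in Hc.
    replace (fst k * (z i - center k i) - (z i - center k i))%C
      with ((fst k - RtoC 1) * (z i - center k i))%C in Hc by ring.
    rewrite Cmod_mult in Hc.
    assert (Cmod (fst k - RtoC 1) * r <= Cmod (fst k - RtoC 1) * Cmod (z i - center k i))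
      by (apply Rmult_le_compat_l; [apply Cmod_ge_0|lra]).
    lra.
Qed.

(** The map [g z |-> g y] between the orbits of [z] and [y], extended by the
    identity elsewhere; well defined when [z] is outside [E_G]. *)
Definition orbit_map (z y x : Cn n) : Cn n :=
  match excluded_middle_informative (exists g, G g /\ x = happ g z) with
  | left H => happ (proj1_sig (constructive_indefinite_description _ H)) y
  | right _ => x
  end.

(** By freeness, the orbit map sends [g z] to [g y], whatever [g] was chosen. *)
Lemma orbit_map_spec z y g : ~ EG G z -> G g -> orbit_map z y (happ g z) = happ g y.
Proof.
  intros Hz Gg. unfold orbit_map. destruct excluded_middle_informative as [H|H].
  - destruct constructive_indefinite_description as [h [Gh Eh]]. simpl.
    rewrite (free_action z h g); auto.
  - exfalso. apply H. exists g. auto.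
Qed.

(** The orbit map is continuous on [G(z)]: if [g' z] is near [g z] then
    [k = g^-1 g'] has ratio near [1] by [ratio_near_one], hence [g' y] is near [g y]. *)
Lemma orbit_map_cont z y : ~ EG G z -> cont_on (orbit G z) (orbit_map z y).
Proof.
  intros Hz x [g [Gg ->]] eps Heps.
  pose proof (G_nz n G HG g Gg) as Hnz.
  destruct (EG_apart n G z Hz) as [r [Hr Hrz]].
  destruct (vbound _ (fun i => y i - z i)%C) as [B [HB HBi]].
  set (L := Cmod (fst g)). assert (HL : 0 < L) by (apply Cmod_gt_0; auto).
  set (eta := eps * r / (L * (r + B))).
  assert (Heta : 0 < eta) by (apply Rdiv_lt_0_compat; nra).
  exists (eta * L). split; [nra|].
  intros x' [g' [Gg' ->]] Hc. rewrite !orbit_map_spec; auto.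
  set (k := hcomp (hinv g) g').
  assert (Gk : G k) by (apply G_comp; auto; apply G_inv; auto).
  assert (Hg' : forall v, happ g' v = happ g (happ k v))
    by (intro v; unfold k; rewrite happ_comp, happ_inv_r; auto).
  assert (Hkz : close eta (happ k z) z).
  { rewrite close_iff. intro i. rewrite Cmod_sym. revert i. rewrite <- close_iff.
    unfold k. rewrite happ_comp. apply close_hinv; auto. }
  pose proof (ratio_near_one z r k eta Gk Heta (Rlt_le _ _ Hr) Hrz Hkz) as Hk.
  rewrite close_iff in *. intro j. specialize (Hc j). specialize (Hkz j). specialize (HBi j).
  rewrite !Hg' in *. rewrite happ_sub, Cmod_mult. fold L.
  replace (y j - happ k y j)%C
    with ((z j - happ k z j) - ((happ k y j - happ k z j) - (y j - z j)))%C by ring.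
  rewrite happ_sub.
  replace (fst k * (y j - z j) - (y j - z j))%C with ((fst k - RtoC 1) * (y j - z j))%C by ring.
  assert (Cmod ((z j - happ k z j) - (fst k - RtoC 1) * (y j - z j)) < eta + eta / r * B).
  { eapply Rle_lt_trans; [apply Cmod_triangle|]. rewrite Cmod_opp, Cmod_mult, Cmod_sym.
    assert (Cmod (fst k - RtoC 1) < eta / r) by (apply (Rmult_lt_reg_r r); auto; field_simplify; lra).
    assert (Cmod (fst k - RtoC 1) * Cmod (y j - z j) <= eta / r * B)
      by (apply Rmult_le_compat; try apply Cmod_ge_0; lra).
    lra. }
  assert (L * (eta + eta / r * B) = eps) by (unfold eta; field; lra).
  nra.
Qed.

Lemma part_iii z y : ~ EG G z -> ~ EG G y -> homeomorphic (orbit G z) (orbit G y).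
Proof.
  intros Hz Hy. exists (orbit_map z y), (orbit_map y z).
  split; [|split; [|split; [|split; [|split]]]].
  - intros x [g [Gg ->]]. rewrite orbit_map_spec; auto. exists g; auto.
  - intros x [g [Gg ->]]. rewrite orbit_map_spec; auto. exists g; auto.
  - intros x [g [Gg ->]]. rewrite !orbit_map_spec; auto.
  - intros x [g [Gg ->]]. rewrite !orbit_map_spec; auto.
  - apply orbit_map_cont; auto.
  - apply orbit_map_cont; auto.
Qed.

End PartIII.

Lemma lattice_approx (mu l nu : Complex.C) : mu <> RtoC 0 -> Im l <> 0 ->
  exists p q : Z, Cmod (RtoC (IZR p) * mu + RtoC (IZR q) * (l * mu) - nu) <= Cmod mu * (1 + Cmod l).
Proof.
  intros Hmu Him. destruct l as [a0 b0]. simpl in Him.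
  remember (nu / mu)%C as q. destruct q as [q1 q2].
  set (t := q2 / b0). set (s := q1 - t * a0).
  assert (Hq : nu = ((RtoC s + RtoC t * (a0, b0)) * mu)%C).
  { replace (RtoC s + RtoC t * (a0, b0))%C with (q1, q2); [rewrite Heqq; field; auto|].
    apply injective_projections; simpl; unfold s, t; field; auto. }
  pose proof (archimed s) as [As1 As2]. pose proof (archimed t) as [At1 At2].
  exists (up s), (up t).
  replace (RtoC (IZR (up s)) * mu + RtoC (IZR (up t)) * ((a0, b0) * mu) - nu)%C
    with (RtoC (IZR (up s) - s) * mu + RtoC (IZR (up t) - t) * ((a0, b0) * mu))%C
    by (rewrite Hq, !RtoC_minus; ring).
  eapply Rle_trans; [apply Cmod_triangle|]. rewrite !Cmod_mult, !Cmod_R.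
  rewrite (Rabs_pos_eq (IZR (up s) - s)), (Rabs_pos_eq (IZR (up t) - t)) by lra.
  pose proof (Cmod_ge_0 mu) as Hm0. pose proof (Cmod_ge_0 (a0, b0)) as Hl0.
  pose proof (Rmult_le_pos _ _ Hl0 Hm0).
  assert ((IZR (up s) - s) * Cmod mu <= Cmod mu) by nra.
  assert ((IZR (up t) - t) * (Cmod (a0, b0) * Cmod mu) <= Cmod (a0, b0) * Cmod mu) by nra.
  nra.
Qed.

Section Subring.
Variable S : Complex.C -> Prop.
Hypothesis S1 : S (RtoC 1).
Hypothesis Sadd : forall a b, S a -> S b -> S (a + b)%C.
Hypothesis Sopp : forall a, S a -> S (- a)%C.
Hypothesis Smul : forall a b, S a -> S b -> S (a * b)%C.

Lemma S_nat m : S (RtoC (INR m)).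
Proof.
  induction m.
  - replace (RtoC (INR 0)) with (RtoC 1 + - RtoC 1)%C by (simpl; ring). auto.
  - rewrite S_INR, RtoC_plus. auto.
Qed.

Lemma S_int k : S (RtoC (IZR k)).
Proof.
  destruct (Z_le_gt_dec 0 k).
  - rewrite <- (Z2Nat.id k); auto. rewrite <- INR_IZR_INZ. apply S_nat.
  - replace k with (- Z.of_nat (Z.to_nat (- k)))%Z by lia.
    rewrite opp_IZR, <- INR_IZR_INZ, RtoC_opp. apply Sopp, S_nat.
Qed.

Lemma S_pow mu k : S mu -> S (mu ^ k)%C.
Proof. intro H. induction k; simpl; auto. Qed.

Definition has_small_elements : Prop :=
  forall d, 0 < d -> exists mu, S mu /\ mu <> RtoC 0 /\ Cmod mu < d.

Definition is_dense : Prop :=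
  forall nu eps, 0 < eps -> exists mu, S mu /\ Cmod (mu - nu) < eps.

Lemma small_of_contraction mu : S mu -> mu <> RtoC 0 -> Cmod mu < 1 -> has_small_elements.
Proof.
  intros Hmu Hnz Hlt d Hd.
  assert (Habs : Rabs (Cmod mu) < 1) by (rewrite Rabs_pos_eq; auto; apply Cmod_ge_0).
  destruct (pow_lt_1_zero _ Habs d Hd) as [N HN]. specialize (HN N (le_n _)).
  exists (mu ^ N)%C. split; [apply S_pow; auto|]. split; [apply Cpow_nz; auto|].
  rewrite Cmod_pow. rewrite Rabs_pos_eq in HN; auto. apply pow_le, Cmod_ge_0.
Qed.

(** Small elements and a non-real [l0] generate fine lattices inside [S]. *)
Lemma dense_of_small l0 : S l0 -> Im l0 <> 0 -> has_small_elements -> is_dense.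
Proof.
  intros Hl0 Him Hsmall nu eps Heps.
  pose proof (Cmod_ge_0 l0).
  destruct (Hsmall (eps / (1 + Cmod l0))) as [mu [Hmu [Hnz Hlt]]]; [apply Rdiv_lt_0_compat; lra|].
  destruct (lattice_approx mu l0 nu Hnz Him) as [p [q Hpq]].
  exists (RtoC (IZR p) * mu + RtoC (IZR q) * (l0 * mu))%C. split; [auto using S_int|].
  eapply Rle_lt_trans; [exact Hpq|].
  apply (Rmult_lt_reg_r (/ (1 + Cmod l0))); [apply Rinv_0_lt_compat; lra|].
  replace (Cmod mu * (1 + Cmod l0) * / (1 + Cmod l0)) with (Cmod mu) by (field; lra). exact Hlt.
Qed.

Lemma dense_or_discrete l0 : S l0 -> Im l0 <> 0 ->
  is_dense \/ forall mu, S mu -> mu <> RtoC 0 -> 1 <= Cmod mu.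
Proof.
  intros Hl0 Him. destruct (classic has_small_elements) as [Hs|Hs].
  - left. apply (dense_of_small l0); auto.
  - right. intros mu Hmu Hnz. apply Rnot_lt_le. intro Hlt. apply Hs.
    apply (small_of_contraction mu); auto.
Qed.

Lemma discrete_real_int x : (forall mu, S mu -> mu <> RtoC 0 -> 1 <= Cmod mu) ->
  S (RtoC x) -> x = IZR (up x - 1).
Proof.
  intros Hdisc Hx. rewrite minus_IZR. pose proof (archimed x) as [Ax1 Ax2].
  assert (IZR (up x) - x = 1); [|simpl; lra].
  destruct (Rle_lt_or_eq_dec _ _ Ax2) as [Hl|]; auto. exfalso.
  assert (S (RtoC (IZR (up x) - x))) as Hfrac.
  { rewrite RtoC_minus. replace (RtoC (IZR (up x)) - RtoC x)%C with (RtoC (IZR (up x)) + - RtoC x)%C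
      by ring. auto using S_int. }
  assert (RtoC (IZR (up x) - x) <> RtoC 0) as Hnz by (intro E; apply (f_equal fst) in E; simpl in E; lra).
  pose proof (Hdisc _ Hfrac Hnz) as Hge. rewrite Cmod_R, Rabs_pos_eq in Hge; lra.
Qed.

End Subring.

Lemma sqrt3_half b : b * b = 3/4 -> b = sqrt 3 / 2 \/ b = - (sqrt 3 / 2).
Proof.
  intro H. pose proof (sqrt_sqrt 3 ltac:(lra)).
  assert ((b - sqrt 3 / 2) * (b + sqrt 3 / 2) = 0) as E by nra.
  apply Rmult_integral in E. destruct E; [left|right]; lra.
Qed.

Lemma SR_of a b (k : Z) : a * a + b * b = 1 -> 2 * a = IZR k -> F2 (a, b) \/ F3 (a, b).
Proof.
  intros E1 E2.
  assert (-1 <= a <= 1) by nra.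
  assert (-2 <= k <= 2)%Z by (split; apply le_IZR; simpl; lra).
  assert (k = -2 \/ k = -1 \/ k = 0 \/ k = 1 \/ k = 2)%Z as Hk by lia.
  pose proof (sqrt_sqrt 3 ltac:(lra)) as S3.
  unfold F2, F3, H2, H3, Cexpi.
  destruct Hk as [->|[->|[->|[->| ->]]]].
  - assert (a = -1) by (simpl in E2; lra). assert (b = 0) by nra. subst.
    left. exists PI. split; [exists 1%Z; right; simpl; lra|].
    rewrite cos_PI, sin_PI. reflexivity.
  - assert (a = -1/2) by (simpl in E2; lra). subst.
    assert (Hb : b * b = 3/4) by nra. right.
    destruct (sqrt3_half b Hb) as [->| ->].
    + exists (- (PI/3) + PI). split; [exists 1%Z; right; left; simpl; lra|].
      rewrite neg_cos, neg_sin, cos_neg, sin_neg, cos_PI3, sin_PI3. f_equal; field.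
    + exists (PI/3 + PI). split; [exists 1%Z; left; simpl; lra|].
      rewrite neg_cos, neg_sin, cos_PI3, sin_PI3. f_equal; field.
  - assert (a = 0) by (simpl in E2; lra). subst.
    assert (Hb : (b - 1) * (b + 1) = 0) by nra. apply Rmult_integral in Hb. left.
    destruct Hb.
    + assert (b = 1) by lra. subst. exists (PI/2). split; [exists 0%Z; left; simpl; lra|].
      rewrite cos_PI2, sin_PI2. reflexivity.
    + assert (b = -1) by lra. subst. exists (- (PI/2)). split; [exists (-1)%Z; left; simpl; lra|].
      rewrite cos_neg, sin_neg, cos_PI2, sin_PI2. reflexivity.
  - assert (a = 1/2) by (simpl in E2; lra). subst.
    assert (Hb : b * b = 3/4) by nra. right.
    destruct (sqrt3_half b Hb) as [->| ->].
    + exists (PI/3). split; [exists 0%Z; left; simpl; lra|].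
      rewrite cos_PI3, sin_PI3. f_equal; field.
    + exists (- (PI/3)). split; [exists 0%Z; right; left; simpl; lra|].
      rewrite cos_neg, sin_neg, cos_PI3, sin_PI3. f_equal; field.
  - assert (a = 1) by (simpl in E2; lra). assert (b = 0) by nra. subst.
    left. exists 0. split; [exists 0%Z; right; simpl; lra|].
    rewrite cos_0, sin_0. reflexivity.
Qed.

Section Multipliers.
Variable n : nat.
Variable G : Hel n -> Prop.
Hypothesis HG : is_subgroup G.

Definition transl (b : Cn n) : Prop := G (Defs.C1, b).

Definition multiplier (mu : Complex.C) : Prop := forall b, transl b -> transl (vscal mu b).

Lemma multiplier_1 : multiplier (RtoC 1).
Proof. intros b Hb. replace (vscal (RtoC 1) b) with b; auto. apply vec_eq; intro i. unfold vscal. toC; ring. Qed.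

Lemma transl_add b b' : transl b -> transl b' -> transl (vadd b b').
Proof.
  intros Hb Hb'. unfold transl. replace (Defs.C1, vadd b b') with (hcomp (Defs.C1, b) (Defs.C1, b')).
  - apply G_comp; auto.
  - apply hel_eq; [rewrite fst_hcomp; cbn [fst]; toC; ring|].
    intro i. rewrite snd_hcomp. cbn [fst snd]. unfold vadd. toC; ring.
Qed.

Lemma multiplier_add mu nu : multiplier mu -> multiplier nu -> multiplier (mu + nu)%C.
Proof.
  intros Hm Hn b Hb. replace (vscal (mu + nu)%C b) with (vadd (vscal mu b) (vscal nu b)).
  - apply transl_add; auto.
  - apply vec_eq; intro i. unfold vadd, vscal. toC; ring.
Qed.

Lemma multiplier_opp mu : multiplier mu -> multiplier (- mu)%C.
Proof.
  intros Hm b Hb. unfold transl. replace (Defs.C1, vscal (- mu)%C b) with (hinv (Defs.C1, vscal mu b)).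
  - apply G_inv; auto. apply Hm; auto.
  - apply hel_eq; [rewrite fst_hinv; cbn [fst]; toC; field|].
    intro i. rewrite snd_hinv. cbn [fst snd]. unfold vscal. toC; field.
Qed.

Lemma multiplier_mul mu nu : multiplier mu -> multiplier nu -> multiplier (mu * nu)%C.
Proof.
  intros Hm Hn b Hb. replace (vscal (mu * nu)%C b) with (vscal mu (vscal nu b)); auto.
  apply vec_eq; intro i. unfold vscal. toC; ring.
Qed.

(** Conjugating the translation by [b] with [g] gives the translation by [lam_g b]. *)
Lemma multiplier_ratio g : G g -> multiplier (fst g).
Proof.
  intros Gg b Hb. pose proof (G_nz n G HG g Gg). unfold transl.
  replace (Defs.C1, vscal (fst g) b) with (hcomp g (hcomp (Defs.C1, b) (hinv g))).
  - apply G_comp; auto. apply G_comp; auto. apply G_inv; auto.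
  - apply hel_eq; [rewrite !fst_hcomp, fst_hinv; cbn [fst]; toC; field; auto|].
    intro i. rewrite !snd_hcomp, snd_hinv. cbn [fst snd]. unfold vscal. toC; field; auto.
Qed.

(** If the multipliers are discrete, every ratio [lam] lies in [F2 ∪ F3]:
    [lam] and [1/lam] are multipliers, so [|lam| = 1], and then the real
    multiplier [lam + 1/lam = 2 Re lam] is an integer. *)
Lemma discrete_multipliers_SR :
  (forall mu, multiplier mu -> mu <> RtoC 0 -> 1 <= Cmod mu) -> forall g, G g -> in_SR g.
Proof.
  intros Hdisc g Gg. pose proof (G_nz n G HG g Gg) as Hnz.
  assert (Rg : multiplier (fst g)) by (apply multiplier_ratio; auto).
  assert (Rg' : multiplier (/ fst g)%C) by (rewrite <- fst_hinv; apply multiplier_ratio, G_inv; auto).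
  assert (Hinz : (/ fst g)%C <> RtoC 0) by (intro E; apply C1_nz; rewrite <- (Cinv_r (fst g)), E; auto; ring).
  assert (Hm1 : Cmod (fst g) = 1).
  { pose proof (Hdisc _ Rg Hnz). pose proof (Hdisc _ Rg' Hinz) as Hi.
    rewrite Cmod_inv in Hi; auto.
    assert (Cmod (fst g) * / Cmod (fst g) = 1) by (field; lra). nra. }
  unfold in_SR, ratio. destruct (fst g) as [a b] eqn:Eg.
  assert (Hab : a * a + b * b = 1).
  { pose proof (Cmod2_alt (a, b)) as E. rewrite Hm1 in E. simpl in E. nra. }
  assert (Hinv : (/ (a, b))%C = (a, (- b)%R)).
  { assert (E : ((a, b) * (a, (- b)%R))%C = RtoC 1) by (apply injective_projections; simpl; nra).
    transitivity (/ (a, b) * ((a, b) * (a, (- b)%R)))%C; [rewrite E; ring|]. field. exact Hnz. }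
  assert (Rx : multiplier (RtoC (2 * a))).
  { replace (RtoC (2 * a)) with ((a, b) + / (a, b))%C; [apply multiplier_add; auto|].
    rewrite Hinv. apply injective_projections; simpl; ring. }
  apply (SR_of a b (up (2 * a) - 1)); auto.
  apply (discrete_real_int multiplier); auto using multiplier_1, multiplier_add, multiplier_opp, multiplier_mul.
Qed.

Lemma multipliers_dense : (exists l, Lambda G l /\ Cim l <> 0) -> (exists g, G g /\ ~ in_SR g) ->
  is_dense multiplier.
Proof.
  intros [l [[g0 [Gg0 El]] Hl]] [g [Gg Hng]].
  destruct (dense_or_discrete multiplier multiplier_1 multiplier_add multiplier_opp multiplier_mul l)
    as [Hd|Hdisc]; auto.
  - rewrite <- El. apply multiplier_ratio; auto.
  - exfalso. apply Hng. apply discrete_multipliers_SR; auto.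
Qed.

End Multipliers.

Lemma affine_translate n (V : Cn n -> Prop) c :
  is_lin_subspace V -> is_affine_subspace (fun u => V (fun i => (u i - c i)%C)).
Proof.
  intro HV. right. exists c, V. split; auto. intro u. split.
  - intro Hu. exists (fun i => (u i - c i)%C). split; auto. apply vec_eq; intro i. unfold vadd. toC; ring.
  - intros [v [Hv ->]]. replace (fun i => (vadd c v i - c i)%C) with v; auto.
    apply vec_eq; intro i. unfold vadd. toC; ring.
Qed.

Fixpoint hpow {n} (h : Hel n) (k : nat) : Hel n :=
  match k with O => hid | S k => hcomp h (hpow h k) end.

Lemma happ_hpow n (h : Hel n) (c : Cn n) k (z : Cn n) i : happ h c = c ->
  happ (hpow h k) z i = (c i + (fst h ^ k) * (z i - c i))%C.
Proof.
  intro Fh. induction k.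
  - simpl hpow. rewrite happ_i. cbn [fst snd hid]. unfold vzero. change (Cpow (fst h) 0) with (RtoC 1).
    toC; ring.
  - change (hpow h (S k)) with (hcomp h (hpow h k)). rewrite happ_comp, happ_i, IHk, (fix_eq n h c i Fh).
    change (Cpow (fst h) (S k)) with (fst h * Cpow (fst h) k)%C. toC; ring.
Qed.

Section Contraction.
Variable n : nat.
Variable G : Hel n -> Prop.
Hypothesis HG : is_subgroup G.

Lemma G_hpow (h : Hel n) k : G h -> G (hpow h k).
Proof. intro Gh. induction k; simpl; [apply G_id|apply G_comp]; auto. Qed.

Lemma commutator_transl h g c c' : G h -> G g -> happ h c = c -> happ g c' = c' ->
  transl n G (fun i => ((RtoC 1 - fst h) * (fst g - RtoC 1) * (c' i - c i))%C).
Proof.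
  intros Gh Gg Fh Fg.
  pose proof (G_nz n G HG h Gh) as Hh0. pose proof (G_nz n G HG g Gg) as Hg0.
  assert (Gk : G (hcomp h (hcomp g (hcomp (hinv h) (hinv g)))))
    by (repeat apply (G_comp n G HG); auto; apply (G_inv n G HG); auto).
  refine (eq_ind _ G Gk _ _). apply hel_eq.
  - rewrite !fst_hcomp, !fst_hinv. cbn [fst]. toC; field; auto.
  - intro i. rewrite !snd_hcomp, !snd_hinv, !fst_hinv. cbn [snd].
    rewrite (fix_eq n h c i Fh), (fix_eq n g c' i Fg). toC; field; auto.
Qed.

Hypothesis Hdense : is_dense (multiplier n G).

(** [W], the closure of the translation vectors, is a linear subspace: it is
    closed under sums and, thanks to the dense multipliers, under scaling. *)
Lemma transl_closure_add u v :
  closure (transl n G) u -> closure (transl n G) v -> closure (transl n G) (vadd u v).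
Proof.
  intros Hu Hv eps Heps.
  destruct (Hu (eps/2)) as [b1 [G1 C1]]; [lra|]. destruct (Hv (eps/2)) as [b2 [G2 C2]]; [lra|].
  exists (vadd b1 b2). split; [apply transl_add; auto|].
  rewrite close_iff in *. intro i. specialize (C1 i). specialize (C2 i).
  replace (vadd u v i - vadd b1 b2 i)%C with ((u i - b1 i) + (v i - b2 i))%C by (unfold vadd; toC; ring).
  eapply Rle_lt_trans; [apply Cmod_triangle|]. lra.
Qed.

(** Scaling by [l]: approximate [u] by a translation vector [b] and [l] by a multiplier. *)
Lemma transl_closure_scal l u : closure (transl n G) u -> closure (transl n G) (vscal l u).
Proof.
  intros Hu eps Heps.
  set (L := Cmod l). assert (0 <= L) by apply Cmod_ge_0.
  destruct (Hu (eps / (2 * (L + 1)))) as [b [Gb Cb]]; [apply Rdiv_lt_0_compat; lra|].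
  destruct (vbound _ b) as [B [HB HBi]].
  destruct (Hdense l (eps / (2 * B))) as [rho [Hrho Hr]]; [apply Rdiv_lt_0_compat; lra|].
  exists (vscal rho b). split; [apply Hrho; auto|].
  rewrite close_iff in *. intro i. specialize (Cb i). specialize (HBi i).
  replace (vscal l u i - vscal rho b i)%C with (l * (u i - b i) + (l - rho) * b i)%C
    by (unfold vscal; toC; ring).
  eapply Rle_lt_trans; [apply Cmod_triangle|]. rewrite !Cmod_mult. fold L. rewrite (Cmod_sym l rho).
  assert (L * Cmod (u i - b i) <= L * (eps / (2 * (L + 1)))) by (apply Rmult_le_compat_l; lra).
  pose proof (scaled_half L eps).
  assert (Cmod (rho - l) * Cmod (b i) <= eps / (2 * B) * B)
    by (apply Rmult_le_compat; try apply Cmod_ge_0; lra).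
  assert (eps / (2 * B) * B = eps / 2) by (field; lra).
  lra.
Qed.

Lemma transl_closure_lin : is_lin_subspace (closure (transl n G)).
Proof.
  split; [|split; [apply transl_closure_add|apply transl_closure_scal]].
  apply closure_incl. exact (G_id n G HG).
Qed.

(** Hence [E_G ⊆ c + W] for the center [c] of any non-translation [h]: the
    affine subspace [c + W] contains [Gamma_G] by [commutator_transl]. *)
Lemma EG_sub_transl_closure h x : G h -> fst h <> RtoC 1 -> EG G x ->
  closure (transl n G) (fun i => (x i - center h i)%C).
Proof.
  intros Gh Hh1 Hx.
  apply (Hx (fun u => closure (transl n G) (fun i => (u i - center h i)%C))).
  - apply affine_translate, transl_closure_lin.
  - intros c' [g [Gg [Hg1 Fg]]].
    assert (N1 : (RtoC 1 - fst h)%C <> RtoC 0) by (apply Csub_nz; auto).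
    assert (N2 : (fst g - RtoC 1)%C <> RtoC 0) by (apply Csub_nz; auto).
    replace (fun i => (c' i - center h i)%C)
      with (vscal (/ ((RtoC 1 - fst h) * (fst g - RtoC 1)))%C
              (fun i => ((RtoC 1 - fst h) * (fst g - RtoC 1) * (c' i - center h i))%C)).
    + apply transl_closure_scal, closure_incl, commutator_transl; auto. apply center_fix; auto.
    + apply vec_eq; intro i. unfold vscal. toC; field; auto.
Qed.

(** With a contraction [h] in [G], every orbit accumulates on all of [E_G]:
    [x = c + w] with [w] near a translation vector [b], and [b + h^N z] tends to [c + b]. *)
Lemma EG_in_orbit_closure h : G h -> Cmod (fst h) < 1 ->
  forall z x, EG G x -> closure (orbit G z) x.
Proof.
  intros Gh Hlt z x Hx eps Heps.
  assert (Hh1 : fst h <> RtoC 1) by (intro E; rewrite E, Cmod_1 in Hlt; lra).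
  destruct (EG_sub_transl_closure h x Gh Hh1 Hx (eps / 2)) as [b [Gb Cb]]; [lra|].
  set (c := center h) in *. assert (Fh : happ h c = c) by (apply center_fix; auto).
  destruct (vbound _ (fun i => (z i - c i)%C)) as [B [HB HBi]].
  assert (Habs : Rabs (Cmod (fst h)) < 1) by (rewrite Rabs_pos_eq; auto; apply Cmod_ge_0).
  destruct (pow_lt_1_zero _ Habs (eps / (2 * B))) as [N HN]; [apply Rdiv_lt_0_compat; lra|].
  specialize (HN N (le_n _)). rewrite Rabs_pos_eq in HN by (apply pow_le, Cmod_ge_0).
  exists (happ (hcomp (Defs.C1, b) (hpow h N)) z). split.
  - eexists. split; [|reflexivity]. apply G_comp; auto. apply G_hpow; auto.
  - rewrite close_iff in *. intro i. specialize (Cb i). specialize (HBi i). simpl in Cb, HBi.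
    rewrite happ_comp, happ_i, happ_hpow with (c := c); auto. cbn [fst snd].
    replace (x i - (Defs.C1 * (c i + fst h ^ N * (z i - c i)) + b i))%C
      with ((x i - c i - b i) + - (fst h ^ N * (z i - c i)))%C by (toC; ring).
    eapply Rle_lt_trans; [apply Cmod_triangle|]. rewrite Cmod_opp, Cmod_mult, Cmod_pow.
    assert (Cmod (fst h) ^ N * Cmod (z i - c i) <= eps / (2 * B) * B)
      by (apply Rmult_le_compat; try lra; [apply pow_le, Cmod_ge_0|apply Cmod_ge_0]).
    assert (eps / (2 * B) * B = eps / 2) by (field; lra).
    lra.
Qed.

End Contraction.

(** A group not contained in [R_n] contains a strict contraction ([g] or [g^-1]). *)
Lemma contraction_exists n (G : Hel n -> Prop) : is_subgroup G ->
  (exists g, G g /\ ~ in_R g) -> exists h, G h /\ Cmod (fst h) < 1.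
Proof.
  intros HG [g [Gg HR]]. unfold in_R, ratio in HR. rewrite Cnorm_e in HR.
  pose proof (G_nz n G HG g Gg).
  destruct (Rtotal_order (Cmod (fst g)) 1) as [Hlt|[He|Hgt]]; [exists g; auto|contradiction|].
  exists (hinv g). split; [apply G_inv; auto|]. rewrite fst_hinv, Cmod_inv; auto.
  apply (Rmult_lt_reg_l (Cmod (fst g))); [lra|]. rewrite Rinv_r; lra.
Qed.

Lemma minimal_of_orbit_dense n (G : Hel n -> Prop) (M : Cn n -> Prop) :
  (exists z, M z) -> is_closed M -> G_invariant G M ->
  (forall z x, M x -> closure (orbit G z) x) -> minimal_set G M.
Proof.
  intros Hne Hcl Hinv Hdense. split; [|split; [|split]]; auto.
  intros F [z0 Fz0] Fcl Finv _ z Mz. apply Fcl. intros eps Heps.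
  destruct (Hdense z0 z Mz eps Heps) as [y [[g [Gg ->]] Hc]].
  exists (happ g z0). split; auto.
Qed.

Lemma part_ii n (G : Hel n -> Prop) : is_subgroup G ->
  (exists l, Lambda G l /\ Cim l <> 0) -> (exists g, G g /\ ~ in_SR g) ->
  (exists g, G g /\ ~ in_R g) ->
  minimal_set G (EG G) /\ forall z x, EG G x -> closure (orbit G z) x.
Proof.
  intros HG Hlam Hsr HR.
  destruct (contraction_exists n G HG HR) as [h [Gh Hlt]].
  pose proof (EG_in_orbit_closure n G HG (multipliers_dense n G HG Hlam Hsr) h Gh Hlt) as Hd.
  split; auto. apply minimal_of_orbit_dense; auto.
  - exists (center h). apply Gamma_EG, center_Gamma; auto.
    intro E. rewrite E, Cmod_1 in Hlt. lra.
  - apply EG_closed.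
  - intros g x Gg Hx. apply EG_inv; auto.
Qed.


Theorem corollary1p2 (n : nat) (G : Hel n -> Prop) :
  is_subgroup G ->
  non_abelian G ->
  (exists l, Lambda G l /\ Cim l <> 0) ->
  (exists g, G g /\ ~ in_SR g) ->
  (exists z, ~ EG G z) ->
  (* (i) *)
  (forall z, ~ EG G z ->
     forall w, closure (orbit G z) w -> ~ EG G w ->
       forall x, (closure (orbit G w) x /\ ~ EG G x) <->
                 (closure (orbit G z) x /\ ~ EG G x)) /\
  (* (ii) *)
  ((exists g, G g /\ ~ in_R g) ->
     minimal_set G (EG G) /\ forall z x, EG G x -> closure (orbit G z) x) /\
  (* (iii) *)
  (forall z y, ~ EG G z -> ~ EG G y -> homeomorphic (orbit G z) (orbit G y)).
Proof.
  intros HG Hna Hlam Hsr _.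
  destruct (Gamma_nonempty n G Hna) as [a Ha].
  split; [|split].
  - apply (part_i n G HG a). apply Gamma_EG; auto.
  - intro HR. apply part_ii; auto.
  - intros z y Hz Hy. apply part_iii; auto.
Qed.
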